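(* Let $(N,v)$ be a balanced game such that $\mathscr{F}:=\mathscr{VE}(N,v)$ is core-describing. If $(N,v)$ is $\mathscr{F}$-weakly extendable, then $(N,v)$ has a nonempty and stable core.
   Context: A game $(N,v)$: $N$ finite nonempty, $v:2^N\to\mathbb{R}$, $v(\varnothing)=0$; $x(S)=\sum_{i\in S}x_i$. Preimputations $X(N,v)=\{x\mid x(N)=v(N)\}$; imputations $I(N,v)=\{x\in X(N,v)\mid x_i\ge v(\{i\})\ \forall i\}$; core $C(N,v)=\{x\in X(N,v)\mid x(S)\ge v(S)\ \forall S\subseteq N\}$; balanced means nonempty core. For a coalition $S$, $C(S,v)=\{y\in\mathbb{R}^S\mid y(S)=v(S),\ y(T)\ge v(T)\ \forall T\subseteq S\}$. $x$ dominates $y$ via $S$ if $x(S)\le v(S)$ and $x_i>y_i$ for all $i\in S$. A set $U\subseteq I(N,v)$ is stable if no element of $U$ dominates another element of $U$ and every $y\in I(N,v)\setminus U$ is dominated by some $x\in U$. $S$ is strictly vital-exact if some $x\in C(N,v)$ has $x(S)=v(S)$ and $x(T)>v(T)$ for all $\varnothing\ne T\subsetneq S$; $\mathscr{VE}(N,v)$ is the set of these. $\mathscr{F}$ is core-describing if $C(N,v)=\{x\in X(N,v)\mid x(S)\ge v(S)\ \forall S\in\mathscr{F}\}$. For $\mathscr{S}\subseteq\mathscr{F}$, $\mathscr{S}$ is $\mathscr{F}$-feasible if $\{x\in X(N,v)\mid x(S)<v(S)\ \forall S\in\mathscr{S},\ x(T)\ge v(T)\ \forall T\in\mathscr{F}\setminus\mathscr{S}\}\neq\varnothing$.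 A coalition $S$ is extendable if for every $y\in C(S,v)$ there is $x\in C(N,v)$ with $x_i=y_i$ for all $i\in S$. The game is $\mathscr{F}$-weakly extendable if every nonempty $\mathscr{F}$-feasible collection contains an inclusion-minimal element (minimal within that collection) which is extendable. *)

From HB Require Import structures.
From mathcomp Require Import all_boot all_order all_algebra.
From mathcomp Require Import reals.
Set Implicit Arguments. Unset Strict Implicit. Unset Printing Implicit Defensive.
Import Order.TTheory GRing.Theory Num.Theory.
Local Open Scope ring_scope.

Section Games.
Variables (R : realType) (N : finType) (v : {set N} -> R).

Definition xsum (x : N -> R) (S : {set N}) : R := \sum_(i in S) x i.

Definition preimp (x : N -> R) : Prop := xsum x [set: N] = v [set: N].

Definition imput (x : N -> R) : Prop :=
  preimp x /\ forall i : N, v [set i] <= x i.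

Definition core (x : N -> R) : Prop :=
  preimp x /\ forall S : {set N}, v S <= xsum x S.

(* C(S,v): vectors y in R^S, represented by functions N -> R whose values
   outside S are irrelevant *)
Definition subcore (S : {set N}) (y : N -> R) : Prop :=
  xsum y S = v S /\ forall T : {set N}, T \subset S -> v T <= xsum y T.

Definition dominates_via (x y : N -> R) (S : {set N}) : Prop :=
  xsum x S <= v S /\ forall i, i \in S -> y i < x i.

Definition dominates (x y : N -> R) : Prop :=
  exists S : {set N}, S != set0 /\ dominates_via x y S.

Definition stable (U : (N -> R) -> Prop) : Prop :=
  (forall x, U x -> imput x) /\
  (forall x y, U x -> U y -> ~ dominates x y) /\
  (forall y, imput y -> ~ U y -> exists x, U x /\ dominates x y).

Definition strictly_vital_exact (S : {set N}) : Prop :=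
  exists x, core x /\ xsum x S = v S /\
    forall T : {set N}, T != set0 -> T \proper S -> v T < xsum x T.

Definition core_describing (F : {set N} -> Prop) : Prop :=
  forall x, core x <-> (preimp x /\ forall S, F S -> v S <= xsum x S).

Definition feasible (F Sc : {set N} -> Prop) : Prop :=
  exists x, preimp x /\ (forall S, Sc S -> xsum x S < v S) /\
    (forall T, F T -> ~ Sc T -> v T <= xsum x T).

Definition extendable (S : {set N}) : Prop :=
  forall y, subcore S y -> exists x, core x /\ forall i, i \in S -> x i = y i.

Definition weakly_extendable (F : {set N} -> Prop) : Prop :=
  forall Sc : {set N} -> Prop,
    (forall S, Sc S -> F S) -> (exists S, Sc S) -> feasible F Sc ->
    exists S, [/\ Sc S, (forall T, Sc T -> T \proper S -> False) & extendable S].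

End Games.

(* The core is internally stable because a core allocation already meets every
   coalition's worth.  For external stability take an imputation y outside the
   core.  Since VE(N,v) describes the core, y violates some strictly vital-exact
   coalition, and weak extendability yields a minimal violated one, S, that is
   extendable.  Raise y uniformly on S to w with w(S) = v(S).  If w were not in
   C(S,v), walk from a vital-exactness witness x towards w and stop at the
   boundary of C(S,v): the point p reached is in C(S,v), and a smallest coalition
   made tight by p is strictly vital-exact (extend p to the core), violated by w
   and hence by y, and properly contained in S, against minimality.  So w lies
   in C(S,v), and any core extension of w dominates y via S. *)
From HB Require Import structures.
From mathcomp Require Import all_boot all_order all_algebra.
From mathcomp Require Import reals lra.
From Stdlib Require Import Classical.

Set Implicit Arguments.
Unset Strict Implicit.
Unset Printing Implicit Defensive.
Import Order.TTheory GRing.Theory Num.Theory.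
Local Open Scope ring_scope.

Section CoreStability.
Variables (R : realType) (N : finType) (v : {set N} -> R).
Hypothesis v0 : v set0 = 0.

Definition convex_comb (t : R) (x w : N -> R) : N -> R :=
  fun i => (1 - t) * x i + t * w i.

Lemma xsum_convex_comb t x w T :
  xsum (convex_comb t x w) T = (1 - t) * xsum x T + t * xsum w T.
Proof. by rewrite /xsum big_split /= -!mulr_sumr. Qed.

Lemma xsum_set1 (x : N -> R) i : xsum x [set i] = x i.
Proof. by rewrite /xsum big_set1. Qed.

Lemma xsum_eq_in (x y : N -> R) (S T : {set N}) :
  T \subset S -> (forall i, i \in S -> x i = y i) -> xsum x T = xsum y T.
Proof. by move=> TS xy; apply: eq_bigr => i /(subsetP TS) /xy. Qed.

Lemma core_imput x : core v x -> imput v x.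
Proof. by move=> [px cx]; split=> // i; rewrite -xsum_set1. Qed.

Lemma core_undominated x y : core v y -> ~ dominates v x y.
Proof.
move=> [_ cy] [S [/set0Pn[j jS] [xS yx]]].
have : xsum y S < xsum x S.
  by apply: ltr_sum yx; apply/hasP; exists j; rewrite ?mem_index_enum.
by have := cy S; lra.
Qed.

Lemma convex_comb_tight_lt t x w T :
  0 <= t -> t < 1 -> v T < xsum x T ->
  xsum (convex_comb t x w) T = v T -> xsum w T < v T.
Proof. by move=> t0 t1 xT; rewrite xsum_convex_comb; nra. Qed.

(* The exit point is at the smallest ratio (x(T) - v(T)) / (x(T) - w(T)) over
   the coalitions T that w violates. *)
Lemma subcore_exit_point (S : {set N}) (x w : N -> R) :
  (forall T : {set N}, T \subset S -> v T <= xsum x T) ->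
  (exists2 T : {set N}, T \subset S & xsum w T < v T) ->
  exists t : R, [/\ 0 <= t, t < 1,
    forall T : {set N}, T \subset S -> v T <= xsum (convex_comb t x w) T &
    exists T1 : {set N}, [/\ T1 \subset S, xsum w T1 < v T1
                 & xsum (convex_comb t x w) T1 = v T1]].
Proof.
move=> xS [T0 T0S wT0].
pose blocked (T : {set N}) := (T \subset S) && (xsum w T < v T).
pose ratio (T : {set N}) := (xsum x T - v T) / (xsum x T - xsum w T).
have ratioP T : blocked T ->
    [/\ 0 <= ratio T, ratio T < 1
      & ratio T * (xsum x T - xsum w T) = xsum x T - v T].
  case/andP=> TS wT; have := xS T TS => xT.
  have gap : 0 < xsum x T - xsum w T by lra.
  split; first by apply: divr_ge0; lra.
    by rewrite ltr_pdivrMr //; lra.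
  by rewrite divfK // gt_eqF.
have blocked_T0 : blocked T0 by rewrite /blocked T0S.
case: (arg_minP ratio blocked_T0) => T1 blocked_T1 T1min.
have [t0 t1 tT1] := ratioP _ blocked_T1.
exists (ratio T1); split=> //; last first.
  exists T1; case/andP: blocked_T1 => T1S wT1; split=> //.
  by rewrite xsum_convex_comb; lra.
move=> T TS; rewrite xsum_convex_comb; have := xS T TS => xT.
have [wT | vT] := ltP (xsum w T) (v T); last by nra.
have blocked_T : blocked T by rewrite /blocked TS.
have [_ _ tT] := ratioP _ blocked_T; have := T1min T blocked_T; nra.
Qed.

Lemma minimal_tight_coalition (p : N -> R) (T1 : {set N}) :
  (forall T : {set N}, T \subset T1 -> v T <= xsum p T) ->
  T1 != set0 -> xsum p T1 = v T1 ->
  exists2 T : {set N}, T \subset T1 &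
    [/\ T != set0, xsum p T = v T
      & forall U : {set N}, U != set0 -> U \proper T -> v U < xsum p U].
Proof.
move=> pT1 T1n0 tight1.
pose tight (T : {set N}) := [&& T \subset T1, T != set0 & xsum p T == v T].
have tight_T1 : tight T1 by rewrite /tight subxx T1n0 tight1 eqxx.
case: (arg_minnP (fun T : {set N} => #|T|) tight_T1) => T /and3P[TT1 Tn0 /eqP pT] Tmin.
exists T => //; split=> // U Un0 UT.
have UT1 : U \subset T1 := subset_trans (proper_sub UT) TT1.
rewrite lt_neqAle pT1 // andbT; apply/eqP => vU.
have := Tmin U; rewrite /tight UT1 Un0 vU eqxx => /(_ isT).
by rewrite leqNgt proper_card.
Qed.

Lemma strictly_vital_exact_of_extendable (S T : {set N}) (p : N -> R) :
  extendable v S -> subcore v S p -> T \subset S -> xsum p T = v T ->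
  (forall U : {set N}, U != set0 -> U \proper T -> v U < xsum p U) ->
  strictly_vital_exact v T.
Proof.
move=> extS pS TS pT pstrict; have [x [cx xp]] := extS p pS.
have xpT (U : {set N}) : U \subset T -> xsum x U = xsum p U.
  by move=> UT; apply: xsum_eq_in (subset_trans UT TS) xp.
exists x; split=> //; split; first by rewrite xpT.
by move=> U Un0 UT; rewrite xpT ?pstrict ?proper_sub.
Qed.

Lemma raised_subcore (S : {set N}) (y w : N -> R) :
  strictly_vital_exact v S -> extendable v S ->
  (forall T, strictly_vital_exact v T -> xsum y T < v T -> ~ T \proper S) ->
  xsum w S = v S -> (forall i, i \in S -> y i <= w i) ->
  subcore v S w.
Proof.
move=> [x [[_ cx] [xS xstrict]]] extS Smin wS yw; split=> // T0 T0S.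
rewrite leNgt; apply/negP => wT0.
have [t [t0 t1 pS [T1 [T1S wT1 pT1]]]] :=
  subcore_exit_point (fun T _ => cx T) (ex_intro2 _ _ T0 T0S wT0).
set p := convex_comb t x w in pS pT1.
have T1n0 : T1 != set0 by apply: contraTneq wT1 => ->; rewrite /xsum big_set0 v0 ltxx.
have T1pS : T1 \proper S.
  by rewrite properEneq T1S andbT; apply: contraTneq wT1 => ->; rewrite wS ltxx.
have [T TT1 [Tn0 pT pstrict]] :=
  minimal_tight_coalition (fun U UT1 => pS U (subset_trans UT1 T1S)) T1n0 pT1.
have TpS : T \proper S := sub_proper_trans TT1 T1pS.
have psub : subcore v S p by split; [rewrite xsum_convex_comb xS wS; lra | ].
have wT : xsum w T < v T by apply: convex_comb_tight_lt t0 t1 (xstrict _ Tn0 TpS) pT.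
apply: (Smin T) => //.
  exact: strictly_vital_exact_of_extendable extS psub (proper_sub TpS) pT pstrict.
apply: le_lt_trans wT; apply: ler_sum => i /(subsetP (proper_sub TpS)); exact: yw.
Qed.

Lemma raise_uniformly (S : {set N}) (y : N -> R) :
  S != set0 -> xsum y S < v S ->
  exists w, xsum w S = v S /\ forall i, i \in S -> y i < w i.
Proof.
move=> Sn0 yS; have cardS : 0 < #|S|%:R :> R by rewrite ltr0n card_gt0.
pose d := (v S - xsum y S) / #|S|%:R.
have d0 : 0 < d by apply: divr_gt0 => //; lra.
exists (fun i => y i + d); split; last by move=> i _; lra.
by rewrite /xsum big_split /= sumr_const -mulr_natr divfK ?gt_eqF // addrC subrK.
Qed.

Lemma violated_describing_coalition (F : {set N} -> Prop) (y : N -> R) :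
  core_describing v F -> preimp v y -> ~ core v y ->
  exists S, F S /\ xsum y S < v S.
Proof.
move=> cd py ny; apply: NNPP => noS; apply/ny/cd; split=> // S FS.
by rewrite leNgt; apply/negP => yS; apply: noS; exists S.
Qed.

Lemma core_dominates_noncore_imput (y : N -> R) :
  core_describing v (strictly_vital_exact v) ->
  weakly_extendable v (strictly_vital_exact v) ->
  imput v y -> ~ core v y -> exists x, core v x /\ dominates v x y.
Proof.
move=> cd we [py _] ny.
pose violated (T : {set N}) := strictly_vital_exact v T /\ xsum y T < v T.
have [S0 violated_S0] := violated_describing_coalition cd py ny.
have feasible_violated : feasible v (strictly_vital_exact v) violated.
  exists y; split=> //; split=> [T [] //|T FT notT].
  by rewrite leNgt; apply/negP => yT; apply: notT.
have [S [[FS yS] Smin extS]] :=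
  we violated (fun T => @proj1 _ _) (ex_intro _ S0 violated_S0) feasible_violated.
have Sn0 : S != set0 by apply: contraTneq yS => ->; rewrite /xsum big_set0 v0 ltxx.
have [w [wS yw]] := raise_uniformly Sn0 yS.
have wsub : subcore v S w.
  apply: raised_subcore FS extS _ wS (fun i iS => ltW (yw i iS)).
  by move=> T FT yT TpS; apply: (Smin T).
have [x [cx xw]] := extS w wsub.
exists x; split=> //; exists S; split=> //; split.
  by rewrite (xsum_eq_in (subxx S) xw) wS.
by move=> i iS; rewrite xw ?yw.
Qed.

End CoreStability.

Theorem proposition7p4 (R : realType) (N : finType) (v : {set N} -> R) :
  (0 < #|N|)%N ->
  v set0 = 0 ->
  (exists x, core v x) ->
  core_describing v (strictly_vital_exact v) ->
  weakly_extendable v (strictly_vital_exact v) ->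
  (exists x, core v x) /\ stable v (core v).
Proof.
move=> _ v0 balanced cd we; split=> //; split; [|split].
- exact: core_imput.
- by move=> x y _ cy; apply: core_undominated.
- by move=> y; apply: core_dominates_noncore_imput.
Qed.
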